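(* Let $\bm{G}_t\in\mathbb{R}^{n_1\times n_2}$, $\epsilon_t>0$, $\bm{L}_t=\epsilon_t\bm{I}_{n_1}+\mathrm{diag}(\bm{G}_t\bm{G}_t^T)$, $\bm{R}_t=\epsilon_t\bm{I}_{n_2}+\mathrm{diag}(\bm{G}_t^T\bm{G}_t)$, $\nu_t=\epsilon_t^{1/2}$, $\mu_t=(\epsilon_t+\|\bm{G}_t\|_\vee^2)^{1/2}$. Let $\bm{Z}_1,\bm{Z}_2\in\mathbb{R}^{n_1\times n_2}$ have ranks $r_1$ and $r_2$ with $r_1+r_2\le\min\{n_1,n_2\}$ and $\langle\bm{Z}_1,\bm{Z}_2\rangle_{\mathcal{W}_t}=0$. Assume the linear operator $\mathcal{A}:\mathbb{R}^{n_1\times n_2}\to\mathbb{R}^m$ satisfies the restricted isometry property of order $r_1+r_2$ with constant $\delta_{r_1+r_2}$. Then $$|\langle\mathcal{A}\bm{Z}_1,\mathcal{A}\bm{Z}_2\rangle|\le\frac12\Big((\nu_t^{-1}-\mu_t^{-1})+(\nu_t^{-1}+\mu_t^{-1})\delta_{r_1+r_2}\Big)\|\bm{Z}_1\|_{\mathcal{W}_t}\|\bm{Z}_2\|_{\mathcal{W}_t}.$$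
   Context: Restricted isometry property of order $s$: there is $\delta_s\in(0,1)$ with $(1-\delta_s)\|\bm{Z}\|_F^2\le\|\mathcal{A}\bm{Z}\|_2^2\le(1+\delta_s)\|\bm{Z}\|_F^2$ for all $\bm{Z}$ of rank at most $s$. $\langle\bm{Z},\bm{Y}\rangle_{\mathcal{W}_t}=\langle\bm{L}_t^{1/4}\bm{Z}\bm{R}_t^{1/4},\bm{Y}\rangle$ with $\langle\bm{A},\bm{B}\rangle=\mathrm{trace}(\bm{A}^T\bm{B})$; $\|\cdot\|_{\mathcal{W}_t}$ is the induced norm. $\|\bm{Z}\|_\vee=\max\{\max_i\|\bm{Z}(i,:)\|_2,\max_j\|\bm{Z}(:,j)\|_2\}$. *)

From HB Require Import structures.
From mathcomp Require Import all_boot all_order all_algebra.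
From mathcomp Require Import reals.
Set Implicit Arguments. Unset Strict Implicit. Unset Printing Implicit Defensive.
Import Order.TTheory GRing.Theory Num.Theory.
Local Open Scope ring_scope.

Section Defs.
Variable R : realType.

Definition Lmat n1 n2 (eps : R) (G : 'M[R]_(n1, n2)) : 'M[R]_n1 :=
  eps%:M + diag_mx (\row_i (G *m G^T) i i).
Definition Rmat n1 n2 (eps : R) (G : 'M[R]_(n1, n2)) : 'M[R]_n2 :=
  eps%:M + diag_mx (\row_j (G^T *m G) j j).

Definition diag_quartrt n (D : 'M[R]_n) : 'M[R]_n :=
  diag_mx (\row_i Num.sqrt (Num.sqrt (D i i))).

Definition Wip n1 n2 (eps : R) (G Z Y : 'M[R]_(n1, n2)) : R :=
  \tr ((diag_quartrt (Lmat eps G) *m Z *m diag_quartrt (Rmat eps G))^T *m Y).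
Definition Wnorm n1 n2 (eps : R) (G Z : 'M[R]_(n1, n2)) : R :=
  Num.sqrt (Wip eps G Z Z).

Definition veenorm n1 n2 (Z : 'M[R]_(n1, n2)) : R :=
  Num.max (\big[Num.max/0]_(i < n1) Num.sqrt (\sum_(j < n2) Z i j ^+ 2))
          (\big[Num.max/0]_(j < n2) Num.sqrt (\sum_(i < n1) Z i j ^+ 2)).

Definition frob2 n1 n2 (Z : 'M[R]_(n1, n2)) : R := \sum_i \sum_j Z i j ^+ 2.

Definition vdot m (u v : 'cV[R]_m) : R := \sum_(i < m) u i 0 * v i 0.

Definition RIP n1 n2 m (A : {linear 'M[R]_(n1, n2) -> 'cV[R]_m}) (s : nat) (delta : R) :=
  0 < delta < 1 /\
  forall Z : 'M[R]_(n1, n2), (\rank Z <= s)%N ->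
    (1 - delta) * frob2 Z <= vdot (A Z) (A Z) <= (1 + delta) * frob2 Z.

End Defs.

From HB Require Import structures.
From mathcomp Require Import all_boot all_order all_algebra.
From mathcomp Require Import reals.
From mathcomp Require Import ring lra.

Set Implicit Arguments.
Unset Strict Implicit.
Unset Printing Implicit Defensive.
Import Order.TTheory GRing.Theory Num.Theory.
Local Open Scope ring_scope.

(* Since L_t and R_t are diagonal, <Z, Y>_W = sum_ij w_ij Z_ij Y_ij with
   w_ij = (L_t)_ii^(1/4) (R_t)_jj^(1/4), and nu <= w_ij <= mu because the
   squared row and column norms of G_t are at most ||G_t||_vee^2; hence
   nu ||Z||_F^2 <= ||Z||_W^2 <= mu ||Z||_F^2.  For W-orthogonal U and V, both
   U + V and U - V have squared W-norm ||U||_W^2 + ||V||_W^2, so polarization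
   and the RIP give
     4 <AU, AV> <= (1 + delta) ||U + V||_F^2 - (1 - delta) ||U - V||_F^2
               <= c (||U||_W^2 + ||V||_W^2),
   with c = (1/nu - 1/mu) + (1/nu + 1/mu) delta.  Taking U = ||Z2||_W Z1 and
   V = +-||Z1||_W Z2 makes the right-hand side 2 c ||Z1||_W^2 ||Z2||_W^2. *)

Section VectorDot.
Variables (R : realType) (m : nat).
Implicit Types u v : 'cV[R]_m.

Lemma vdotZ (a b : R) u v : vdot (a *: u) (b *: v) = a * b * vdot u v.
Proof. by rewrite /vdot mulr_sumr; apply: eq_bigr => i _; rewrite !mxE; ring. Qed.

Lemma vdot0l v : vdot 0 v = 0.
Proof. by rewrite /vdot big1 // => i _; rewrite mxE mul0r. Qed.

Lemma vdot0r v : vdot v 0 = 0.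
Proof. by rewrite /vdot big1 // => i _; rewrite mxE mulr0. Qed.

Lemma vdot_polar u v : vdot (u + v) (u + v) - vdot (u - v) (u - v) = 4 * vdot u v.
Proof. by rewrite /vdot -sumrB mulr_sumr; apply: eq_bigr => i _; rewrite !mxE; ring. Qed.

End VectorDot.

Section WeightedInnerProduct.
Variables (R : realType) (n1 n2 : nat) (eps : R) (G : 'M[R]_(n1, n2)).
Implicit Types Z Y U V : 'M[R]_(n1, n2).

Local Notation nu := (Num.sqrt eps).
Local Notation mu := (Num.sqrt (eps + veenorm G ^+ 2)).
Local Notation qrt x := (Num.sqrt (Num.sqrt x)).

Definition Wweight (i : 'I_n1) (j : 'I_n2) : R :=
  qrt (Lmat eps G i i) * qrt (Rmat eps G j j).

Lemma WipE Z Y : Wip eps G Z Y = \sum_i \sum_j Wweight i j * (Z i j * Y i j).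
Proof.
rewrite /Wip /diag_quartrt mul_diag_mx mul_mx_diag /mxtrace exchange_big /=.
apply: eq_bigr => j _; rewrite !mxE; apply: eq_bigr => i _.
by rewrite /Wweight /Lmat /Rmat !mxE; ring.
Qed.

Lemma WipZ (a b : R) U V : Wip eps G (a *: U) (b *: V) = a * b * Wip eps G U V.
Proof.
rewrite !WipE mulr_sumr; apply: eq_bigr => i _.
by rewrite mulr_sumr; apply: eq_bigr => j _; rewrite !mxE; ring.
Qed.

Lemma Wip_sqrD U V :
  Wip eps G (U + V) (U + V) = Wip eps G U U + Wip eps G V V + 2 * Wip eps G U V.
Proof.
rewrite !WipE mulr_sumr -!big_split; apply: eq_bigr => i _.
by rewrite mulr_sumr -!big_split; apply: eq_bigr => j _; rewrite !mxE /=; ring.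
Qed.

Lemma Wip_sqrB U V :
  Wip eps G (U - V) (U - V) = Wip eps G U U + Wip eps G V V - 2 * Wip eps G U V.
Proof.
rewrite !WipE mulr_sumr -!big_split -sumrB; apply: eq_bigr => i _.
by rewrite mulr_sumr -!big_split -sumrB; apply: eq_bigr => j _; rewrite !mxE /=; ring.
Qed.

Lemma Lmat_diagE i : Lmat eps G i i = eps + \sum_j G i j ^+ 2.
Proof.
rewrite /Lmat !mxE eqxx mulr1n; congr (_ + _).
by apply: eq_bigr => j _; rewrite !mxE.
Qed.

Lemma Rmat_diagE j : Rmat eps G j j = eps + \sum_i G i j ^+ 2.
Proof.
rewrite /Rmat !mxE eqxx mulr1n; congr (_ + _).
by apply: eq_bigr => i _; rewrite !mxE.
Qed.

Lemma row_sqr_le_veenorm i : \sum_j G i j ^+ 2 <= veenorm G ^+ 2.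
Proof.
rewrite -ler_sqrt ?sqr_ge0 // sqrtr_sqr (le_trans _ (ler_norm _)) //.
rewrite /veenorm le_max; apply/orP; left.
exact: (le_bigmax _ (fun i => Num.sqrt (\sum_j G i j ^+ 2)) i).
Qed.

Lemma col_sqr_le_veenorm j : \sum_i G i j ^+ 2 <= veenorm G ^+ 2.
Proof.
rewrite -ler_sqrt ?sqr_ge0 // sqrtr_sqr (le_trans _ (ler_norm _)) //.
rewrite /veenorm le_max; apply/orP; right.
exact: (le_bigmax _ (fun j => Num.sqrt (\sum_i G i j ^+ 2)) j).
Qed.

Lemma ler_qrt (a b : R) : 0 <= a -> a <= b -> qrt a <= qrt b.
Proof.
move=> a0 ab; have b0 := le_trans a0 ab.
by rewrite ler_sqrt ?sqrtr_ge0 // ler_sqrt.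
Qed.

Hypothesis eps_gt0 : 0 < eps.

Lemma Wweight_bounds i j : nu <= Wweight i j <= mu.
Proof.
have eps_ge0 := ltW eps_gt0.
have sum_ge0 (k : nat) (f : 'I_k -> R) : 0 <= \sum_l f l ^+ 2.
  by apply: sumr_ge0 => l _; apply: sqr_ge0.
have qrt_sqr (a : R) : 0 <= a -> qrt a * qrt a = Num.sqrt a.
  by move=> a0; rewrite -expr2 sqr_sqrtr ?sqrtr_ge0.
apply/andP; split.
  rewrite -(qrt_sqr _ eps_ge0) ler_pM ?sqrtr_ge0 // ler_qrt //.
    by rewrite Lmat_diagE lerDl sum_ge0.
  by rewrite Rmat_diagE lerDl sum_ge0.
rewrite -qrt_sqr ?addr_ge0 ?sqr_ge0 // ler_pM ?sqrtr_ge0 // ler_qrt //.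
- by rewrite Lmat_diagE addr_ge0 ?sum_ge0.
- by rewrite Lmat_diagE lerD2l row_sqr_le_veenorm.
- by rewrite Rmat_diagE addr_ge0 ?sum_ge0.
- by rewrite Rmat_diagE lerD2l col_sqr_le_veenorm.
Qed.

Lemma Wip_ge_frob2 Z : nu * frob2 Z <= Wip eps G Z Z.
Proof.
rewrite WipE /frob2 mulr_sumr; apply: ler_sum => i _; rewrite mulr_sumr.
apply: ler_sum => j _; rewrite -expr2 ler_wpM2r ?sqr_ge0 //.
by case/andP: (Wweight_bounds i j).
Qed.

Lemma Wip_le_frob2 Z : Wip eps G Z Z <= mu * frob2 Z.
Proof.
rewrite WipE /frob2 mulr_sumr; apply: ler_sum => i _; rewrite mulr_sumr.
apply: ler_sum => j _; rewrite -expr2 ler_wpM2r ?sqr_ge0 //.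
by case/andP: (Wweight_bounds i j).
Qed.

Lemma frob2_ge0 Z : 0 <= frob2 Z.
Proof. by apply: sumr_ge0 => i _; apply: sumr_ge0 => j _; apply: sqr_ge0. Qed.

Lemma frob2_eq0 Z : frob2 Z = 0 -> Z = 0.
Proof.
move=> frob0; apply/matrixP => i j; rewrite mxE.
have row0 :=
  psumr_eq0P (fun i _ => sumr_ge0 _ (fun j _ => sqr_ge0 (Z i j))) frob0 (i := i) isT.
have /eqP := psumr_eq0P (fun j _ => sqr_ge0 (Z i j)) row0 (i := j) isT.
by rewrite sqrf_eq0 => /eqP.
Qed.

Lemma Wip_ge0 Z : 0 <= Wip eps G Z Z.
Proof. by rewrite (le_trans _ (Wip_ge_frob2 Z)) ?mulr_ge0 ?sqrtr_ge0 ?frob2_ge0. Qed.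

Lemma Wnorm_eq0 Z : Wnorm eps G Z = 0 -> Z = 0.
Proof.
move=> /eqP; rewrite sqrtr_eq0 => WZ_le0; apply: frob2_eq0; apply/eqP.
have nu_gt0 : 0 < nu by rewrite sqrtr_gt0.
rewrite eq_le frob2_ge0 andbT -(pmulr_rle0 _ nu_gt0).
exact: le_trans (Wip_ge_frob2 Z) WZ_le0.
Qed.

Variables (m s : nat) (A : {linear 'M[R]_(n1, n2) -> 'cV[R]_m}) (delta : R).
Hypothesis A_RIP : RIP A s delta.

Local Notation RIP_const := ((nu^-1 - mu^-1) + (nu^-1 + mu^-1) * delta).

Lemma vdot_RIP_orth_le U V :
  Wip eps G U V = 0 -> (\rank U + \rank V <= s)%N ->
  4 * vdot (A U) (A V) <= RIP_const * (Wip eps G U U + Wip eps G V V).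
Proof.
move=> UV0 rkUV; have [/andP[delta_gt0 delta_lt1] RIP_A] := A_RIP.
set S := Wip eps G U U + Wip eps G V V.
have nu_gt0 : 0 < nu by rewrite sqrtr_gt0.
have mu_gt0 : 0 < mu by rewrite sqrtr_gt0 ltr_wpDr ?sqr_ge0.
have rkD : (\rank (U + V)%R <= s)%N := leq_trans (mxrank_add U V) rkUV.
have rkB : (\rank (U - V)%R <= s)%N.
  by rewrite (leq_trans (mxrank_add _ _)) ?mxrank_opp.
have frobD : frob2 (U + V) <= nu^-1 * S.
  by rewrite ler_pdivlMl // -[S]addr0 -(mulr0 2) -UV0 -Wip_sqrD Wip_ge_frob2.
have frobB : mu^-1 * S <= frob2 (U - V).
  by rewrite ler_pdivrMl // -[S]subr0 -(mulr0 2) -UV0 -Wip_sqrB Wip_le_frob2.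
have /andP[_ AD_le] := RIP_A _ rkD.
have /andP[AB_ge _] := RIP_A _ rkB.
rewrite -vdot_polar -linearD -linearB.
have -> : RIP_const * S = (1 + delta) * (nu^-1 * S) - (1 - delta) * (mu^-1 * S).
  by ring.
have frobD' : (1 + delta) * frob2 (U + V) <= (1 + delta) * (nu^-1 * S).
  by rewrite ler_wpM2l //; lra.
have frobB' : (1 - delta) * (mu^-1 * S) <= (1 - delta) * frob2 (U - V).
  by rewrite ler_wpM2l //; lra.
lra.
Qed.

Lemma vdot_RIP_orth Z1 Z2 :
  Wip eps G Z1 Z2 = 0 -> (\rank Z1 + \rank Z2 <= s)%N ->
  `|vdot (A Z1) (A Z2)| <= 2^-1 * RIP_const * Wnorm eps G Z1 * Wnorm eps G Z2.
Proof.
move=> Z12 rk12; set x := Wnorm eps G Z1; set y := Wnorm eps G Z2.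
have [x0 | x_neq0] := eqVneq x 0.
  by rewrite (Wnorm_eq0 x0) linear0 vdot0l normr0 x0 mulr0 mul0r.
have [y0 | y_neq0] := eqVneq y 0.
  by rewrite (Wnorm_eq0 y0) linear0 vdot0r normr0 y0 mulr0.
have xy_gt0 : 0 < x * y by rewrite mulr_gt0 // lt_def ?x_neq0 ?y_neq0 ?sqrtr_ge0.
have x2 : x ^+ 2 = Wip eps G Z1 Z1 by rewrite sqr_sqrtr ?Wip_ge0.
have y2 : y ^+ 2 = Wip eps G Z2 Z2 by rewrite sqr_sqrtr ?Wip_ge0.
have bound (b : R) : 4 * (y * b * vdot (A Z1) (A Z2)) <=
    RIP_const * (y ^+ 2 * x ^+ 2 + b ^+ 2 * y ^+ 2).
  have -> : y ^+ 2 * x ^+ 2 + b ^+ 2 * y ^+ 2 =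
      Wip eps G (y *: Z1) (y *: Z1) + Wip eps G (b *: Z2) (b *: Z2).
    by rewrite !WipZ -x2 -y2; ring.
  rewrite -vdotZ -!linearZ vdot_RIP_orth_le ?WipZ ?Z12 ?mulr0 //.
  by rewrite (leq_trans _ rk12) // leq_add ?mxrank_scale.
have := bound x; have := bound (- x).
set P := vdot _ _; set c := RIP_const => lower upper.
rewrite ler_norml; apply/andP; split; nra.
Qed.

End WeightedInnerProduct.

Theorem lemma3p8 (R : realType) (n1 n2 m : nat) (G : 'M[R]_(n1, n2)) (eps : R)
  (A : {linear 'M[R]_(n1, n2) -> 'cV[R]_m}) (Z1 Z2 : 'M[R]_(n1, n2))
  (r1 r2 : nat) (delta : R) :
  0 < eps ->
  \rank Z1 = r1 -> \rank Z2 = r2 -> (r1 + r2 <= minn n1 n2)%N ->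
  Wip eps G Z1 Z2 = 0 ->
  RIP A (r1 + r2) delta ->
  let nu := Num.sqrt eps in
  let mu := Num.sqrt (eps + veenorm G ^+ 2) in
  `|vdot (A Z1) (A Z2)| <=
    2^-1 * ((nu^-1 - mu^-1) + (nu^-1 + mu^-1) * delta)
      * Wnorm eps G Z1 * Wnorm eps G Z2.
Proof.
(* The bound r1 + r2 <= min n1 n2 only makes the RIP order meaningful. *)
move=> eps_gt0 rk1 rk2 _ Z12 A_RIP /=.
by apply: (vdot_RIP_orth eps_gt0 A_RIP Z12); rewrite rk1 rk2.
Qed.
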